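(* Let $F=\{F_n\}_{n\in\mathbb{Z}}$ be a sequence with values in $\mathbb{D}$ such that $F_n=0$ for $n<n_0$ (for some $n_0\in\mathbb{Z}$) and $F_n\to0$ as $n\to+\infty$. Then there is an absolute constant $C$ such that, for all sufficiently large $n$, $$\big|\arg\mathfrak{a}^{( * )}(z,F^{\langle n\rangle})-\arg\mathfrak{a}^{( * )}(z,F^{\langle n-1\rangle})\big|\leqslant C|F_n|\quad\text{uniformly in }z\in\overline{\mathbb{D}},$$ and in particular this difference tends to $0$ uniformly in $z\in\overline{\mathbb{D}}$ as $n\to\infty$.
   Context: $\mathbb{T}$, $\mathbb{D}$ denote the unit circle and open unit disc; $m$ is normalized Lebesgue measure on $\mathbb{T}$. $F^{\langle N\rangle}_n=F_n\chi_{|n|\leqslant N}$. For a finitely supported $G$ with values in $\mathbb{D}$: $\widetilde X_n(z)=I$ below the support, $\widetilde X_n=(1-|G_n|^2)^{-1/2}\begin{pmatrix}1&\overline{G_n}z^{-n}\\ G_nz^n&1\end{pmatrix}\widetilde X_{n-1}$, and above the support $\widetilde X_n=\begin{pmatrix}\mathfrak{a}(z,G)&\mathfrak{b}^{( * )}(z,G)\\ \mathfrak{b}(z,G)&\mathfrak{a}^{( * )}(z,G)\end{pmatrix}$ with $f^{( * )}(z)=\overline{f(\bar z^{-1})}$. The function $\mathfrak{a}^{( * )}(\cdot,G)$ is analytic in $\mathbb{D}$, continuous and nonvanishing on $\overline{\mathbb{D}}$, outer, with $\mathfrak{a}^{( * )}(0,G)>0$; its argument $\arg\mathfrak{a}^{(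 * )}(z,G)$ is the continuous branch on $\overline{\mathbb{D}}$ with value $0$ at $z=0$, i.e. $\frac12\int_{\mathbb{T}}\operatorname{Im}\frac{\xi+z}{\xi-z}\log(1+|\mathfrak{b}(\xi,G)|^2)\,dm(\xi)$ in $\mathbb{D}$, extended to $\mathbb{T}$ by the corresponding principal-value (Hilbert transform) integral. *)

From HB Require Import structures.
From mathcomp Require Import all_boot all_order all_algebra.
From mathcomp Require Import complex.
From mathcomp Require Import all_classical all_reals.
From mathcomp Require Import all_analysis.
Set Implicit Arguments. Unset Strict Implicit. Unset Printing Implicit Defensive.
Import Order.TTheory GRing.Theory Num.Theory.
Import numFieldTopology.Exports numFieldNormedType.Exports.
Local Open Scope ring_scope.
Local Open Scope complex_scope.
Local Open Scope classical_set_scope.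

Section NLFT.
Variable R : realType.

Definition cmod (z : R[i]) : R := Normc.normc z.

Definition trunc (F : int -> R[i]) (N : int) : int -> R[i] :=
  fun n => if (`|n|%R <= N)%R then F n else 0.

Definition step (G : int -> R[i]) (n : int) (z : R[i]) : 'M[R[i]]_2 :=
  ((Num.sqrt (1 - cmod (G n) ^+ 2))^-1)%:C *:
  \matrix_(i < 2, j < 2)
     (if (val i == 0%N) then (if (val j == 0%N) then 1 else conjc (G n) * z ^ (- n))
      else (if (val j == 0%N) then G n * z ^ n else 1)).

(* transfer matrix over the indices lo, lo+1, ..., lo+k-1 (highest index on
   the left), starting from the identity below lo *)
Fixpoint transfer (G : int -> R[i]) (lo : int) (k : nat) (z : R[i]) : 'M[R[i]]_2 :=
  match k with
  | O => 1%:M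
  | S k' => step G (lo + k'%:Z) z *m transfer G lo k' z
  end.

(* \tilde X above the support, computed on the window [lo, hi] which
   must contain the support of G (and hi >= lo - 1) *)
Definition Xabove (G : int -> R[i]) (lo hi : int) (z : R[i]) : 'M[R[i]]_2 :=
  transfer G lo (absz (hi - lo + 1)%R) z.

Definition astar (G : int -> R[i]) (lo hi : int) (z : R[i]) : R[i] :=
  Xabove G lo hi z ord_max ord_max.

Definition cdisc2 : set (R * R) := [set p | p.1 ^+ 2 + p.2 ^+ 2 <= 1].

(* theta is the argument of a^{star}(., G): the continuous branch on the
   closed disc with value 0 at z = 0 *)
Definition is_arg_astar (G : int -> R[i]) (lo hi : int) (theta : R[i] -> R) : Prop :=
  [/\ {within cdisc2, continuous (fun p : R * R => theta (p.1 +i* p.2))},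
      theta 0 = 0 &
      forall z : R[i], z != 0 -> cmod z <= 1 ->
        astar G lo hi z = (cmod (astar G lo hi z))%:C * (cos (theta z) +i* sin (theta z))].

End NLFT.

(* Write [a_n] for [a^*(z, F^<n>)]. One more step of the transfer recursion gives
   [a_n = c_n (a_(n-1) + F_n z^n b)], and the invariant [|a^*|^2 - |z^n b^*|^2 >= 1]
   on the closed disc gives [|z^n b| <= |a_(n-1)|]; so [a_n / a_(n-1)] is a positive
   multiple of [1 + u] with [|u| <= |F_n|]. Once [|F_n| <= 1/2], the difference [d] of
   the two continuous arguments thus has [cos d > 0] and [|tan d| <= 2 |F_n|] off [0].
   As [d 0 = 0] and [d] is continuous on the disc, [d] never leaves [(-pi/2, pi/2)],
   where [|d| <= |tan d|]: the theorem holds with [C = 2]. *)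

From HB Require Import structures.
From mathcomp Require Import all_boot all_order all_algebra.
From mathcomp Require Import complex.
From mathcomp Require Import all_classical all_reals.
From mathcomp Require Import all_analysis.
From mathcomp Require Import ring lra zify.
Set Implicit Arguments. Unset Strict Implicit. Unset Printing Implicit Defensive.
Import Order.TTheory GRing.Theory Num.Theory.
Import numFieldTopology.Exports numFieldNormedType.Exports.
Local Open Scope ring_scope.
Local Open Scope complex_scope.
Local Open Scope classical_set_scope.

Section TransferMatrix.
Variable R : realType.
Implicit Types (G : int -> R[i]) (z : R[i]).

Definition step_scale (g : R[i]) : R := (Num.sqrt (1 - cmod g ^+ 2))^-1.

Lemma cmod_ge0 z : 0 <= cmod z.
Proof. by case: z => a b; rewrite /cmod /= sqrtr_ge0. Qed.

Lemma step_scale_gt0 (g : R[i]) : cmod g < 1 -> 0 < step_scale g.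
Proof. by move=> g1; rewrite invr_gt0 sqrtr_gt0 subr_gt0 expr_lt1 ?cmod_ge0. Qed.

Lemma step_scale_sqr (g : R[i]) :
  cmod g < 1 -> `|(step_scale g)%:C| ^+ 2 * (1 - `|g| ^+ 2) = 1.
Proof.
move=> g1; have s_gt0 : 0 < 1 - cmod g ^+ 2 by rewrite subr_gt0 expr_lt1 ?cmod_ge0.
rewrite ger0_norm ?lecR ?ltW ?step_scale_gt0 //.
have -> : 1 - `|g| ^+ 2 = (1 - cmod g ^+ 2)%:C by rewrite rmorphB rmorphXn rmorph1.
by rewrite -rmorphXn -rmorphM exprVn sqr_sqrtr ?ltW // mulVf ?gt_eqF.
Qed.

Lemma hyperbolic_step_norm (c g A B : R[i]) : `|c| ^+ 2 * (1 - `|g| ^+ 2) = 1 ->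
  `|c * (g * B + A)| ^+ 2 - `|c * (B + g^* * A)| ^+ 2 = `|A| ^+ 2 - `|B| ^+ 2.
Proof.
move=> cg; rewrite !normrM !exprMn -mulrBr -[RHS]mul1r -cg -mulrA; congr (_ * _).
rewrite !sqr_normc !rmorphD !rmorphM /= conjcK; ring.
Qed.

Lemma eq_transfer G1 G2 lo k z :
  (forall m, lo <= m < lo + k%:Z -> G1 m = G2 m) ->
  transfer G1 lo k z = transfer G2 lo k z.
Proof.
elim: k => //= k IH eqG; have lt_k : lo + k%:Z < lo + k.+1%:Z by rewrite ltrD2l ltz_nat.
rewrite IH => [|m /andP[lo_m m_k]]; last by rewrite eqG // lo_m (lt_trans m_k).
by rewrite /step eqG // lerDl lt_k.
Qed.

Lemma mulmx_step01 G m z (M : 'M[R[i]]_2) : (step G m z *m M) ord0 ord_max =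
  (step_scale (G m))%:C * (M ord0 ord_max + (G m)^* * z ^ (- m) * M ord_max ord_max).
Proof.
rewrite !mxE !big_ord_recr big_ord0 /= !mxE /= add0r.
by rewrite (_ : widen_ord _ _ = ord0) ?mulr1 ?mulrDr ?mulrA //; apply/val_inj.
Qed.

Lemma mulmx_step11 G m z (M : 'M[R[i]]_2) : (step G m z *m M) ord_max ord_max =
  (step_scale (G m))%:C * (G m * z ^ m * M ord0 ord_max + M ord_max ord_max).
Proof.
rewrite !mxE !big_ord_recr big_ord0 /= !mxE /= add0r.
by rewrite (_ : widen_ord _ _ = ord0) ?mulr1 ?mulrDr ?mulrA //; apply/val_inj.
Qed.

(* Each step preserves [|a^*|^2 - |z^m b^*|^2] by [hyperbolic_step_norm], except that
   the exponent of [z] grows by one, which for [|z| <= 1] can only help. *)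
Lemma transfer_norm_gap G lo k z : (forall m, cmod (G m) < 1) -> z != 0 -> cmod z <= 1 ->
  1 + `|z ^ (lo + k%:Z) * transfer G lo k z ord0 ord_max| ^+ 2
    <= `|transfer G lo k z ord_max ord_max| ^+ 2.
Proof.
move=> G1 z0 z1; elim: k => [|k IH] /=.
  by rewrite !mxE /= mulr0 normr0 expr0n addr0 normr1 expr1n.
rewrite mulmx_step01 mulmx_step11.
set m := lo + k%:Z; set c := (step_scale (G m))%:C; set g := G m.
set A := transfer G lo k z ord_max ord_max in IH *; set b := transfer G lo k z ord0 ord_max.
set B := z ^ m * b in IH.
have zm0 : z ^ m != 0 by rewrite expfz_neq0.
have -> : z ^ (lo + k.+1%:Z) * (c * (b + g^* * z ^ (- m) * A)) = z * (c * (B + g^* * A)).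
  by rewrite intS addrCA expfzDr // expr1z -invr_expz /B; field.
rewrite -(mulrA g) -/B normrM exprMn.
have z_le1 : `|z| ^+ 2 <= 1 by rewrite expr_le1 // -[`|z|]/((cmod z)%:C) lecR.
have B_le : `|c * (B + g^* * A)| ^+ 2 = `|c * (g * B + A)| ^+ 2 - (`|A| ^+ 2 - `|B| ^+ 2).
  by rewrite -(hyperbolic_step_norm A B (step_scale_sqr (G1 m))) subKr.
apply: le_trans (lerD (lexx 1) (ler_piMl (exprn_ge0 _ (normr_ge0 _)) z_le1)) _.
by rewrite B_le addrCA gerDl subr_le0 lerBrDr.
Qed.

End TransferMatrix.

Section ArgumentBounds.
Variable R : realType.

Lemma atan_le_id (y : R) : 0 <= y -> atan y <= y.
Proof.
rewrite le_eqVlt => /predU1P[<-|y_gt0]; first by rewrite atan0.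
have atan_cont : {within `[0, y], continuous (@atan R)}.
  by apply: continuous_subspaceT => x; exact: continuous_atan.
have [c _] := MVT y_gt0 (fun x _ => is_derive1_atan x) atan_cont.
rewrite atan0 !subr0 => ->; rewrite ler_piMl ?(ltW y_gt0) // invf_le1; nra.
Qed.

Lemma normr_atan_le (t : R) : `|atan t| <= `|t|.
Proof.
wlog t_ge0 : t / 0 <= t.
  move=> le_t; case: (leP 0 t) => [/le_t //|/ltW].
  by rewrite -oppr_ge0 -normrN -atanN => /le_t; rewrite normrN.
by rewrite !ger0_norm ?atan_le_id // -atan0 le_atan.
Qed.

Lemma normr_le_tan (d : R) : -(pi / 2) < d < pi / 2 -> `|d| <= `|tan d|.
Proof.
by move=> d_bnd; rewrite -{1}(@tanK R d) ?in_itv //= normr_atan_le.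
Qed.

Lemma tan_bound_of_ratio (P Q x y r d : R) :
  0 <= P -> 0 < Q -> `|x| <= r -> `|y| <= r -> r <= 1 / 2 ->
  P * cos d = Q * (1 + x) -> P * sin d = Q * y ->
  0 < cos d /\ `|tan d| <= 2 * r.
Proof.
move=> P_ge0 Q_gt0 + y_le r_le Pcos Psin; rewrite ler_norml => /andP[x_ge _].
have Pcos_gt0 : 0 < P * cos d by rewrite Pcos mulr_gt0 //; lra.
have cos_gt0 : 0 < cos d by nra.
have P_neq0 : P != 0 by apply: contraTneq Pcos_gt0 => ->; rewrite mul0r ltxx.
have -> : tan d = y / (1 + x).
  rewrite /tan -(mulKf P_neq0 (sin d)) -(mulKf P_neq0 (cos d)) Psin Pcos.
  by field; apply/andP; split; rewrite gt_eqF //; lra.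
split => //; rewrite normrM normfV (gtr0_norm (_ : 0 < 1 + x)); last by lra.
rewrite ler_pdivrMr; last by lra.
have r_ge0 : 0 <= r := le_trans (normr_ge0 y) y_le.
nra.
Qed.

Lemma normr_le_cmod (x y : R) : `|x| <= cmod (x +i* y) /\ `|y| <= cmod (x +i* y).
Proof.
by rewrite -!sqrtr_sqr /cmod /= !ler_sqrt ?addr_ge0 ?sqr_ge0 ?lerDl ?lerDr ?sqr_ge0.
Qed.

Lemma tan_arg_diff_le (a1 a0 u : R[i]) (c t1 t0 : R) :
  0 < c -> a0 != 0 -> cmod u <= 1 / 2 -> a1 = c%:C * (a0 * (1 + u)) ->
  a1 = (cmod a1)%:C * (cos t1 +i* sin t1) -> a0 = (cmod a0)%:C * (cos t0 +i* sin t0) ->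
  0 < cos (t1 - t0) /\ `|tan (t1 - t0)| <= 2 * cmod u.
Proof.
move=> c_gt0 a0_neq0 u_le a1E a1P a0P.
have Q_gt0 : 0 < cmod a0.
  by rewrite lt_neqAle cmod_ge0 andbT eq_sym; apply: contra a0_neq0 => /eqP/Normc.eq0_normc ->.
move: a1E; rewrite {1}a1P {1}a0P; move: (cmod a1) (cmod a0) (cmod_ge0 a1) Q_gt0.
case: u u_le => x y u_le P Q P_ge0 Q_gt0; have [x_le y_le] := normr_le_cmod x y.
move: (cmod _) u_le x_le y_le => r r_le x_le y_le.
move/eqP; rewrite eq_complex /= !mul0r !subr0 !addr0 !add0r => /andP[/eqP Pcos /eqP Psin].
apply: (tan_bound_of_ratio P_ge0 (mulr_gt0 c_gt0 Q_gt0) x_le y_le r_le).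
  rewrite cosB mulrDr !mulrA Pcos Psin -[RHS]mulr1 -(cos2Dsin2 t0); ring.
rewrite sinB mulrBr !mulrA Pcos Psin -[RHS]mulr1 -(cos2Dsin2 t0); ring.
Qed.

End ArgumentBounds.

Section DiscPaths.
Variable R : realType.

Lemma cmod_le1E (x y : R) : (cmod (x +i* y) <= 1) = (x ^+ 2 + y ^+ 2 <= 1).
Proof. by rewrite /cmod /= -{1}sqrtr1 ler_sqrt. Qed.

Lemma continuous_along_radius (g : R * R -> R) (x y : R) : x ^+ 2 + y ^+ 2 <= 1 ->
  {within (@cdisc2 R), continuous g} -> {within `[0, 1], continuous (fun t => g (t * x, t * y))}.
Proof.
move=> xy_le /subspace_continuousP g_cont; apply/subspace_continuousP => t t01.
have radius_in s : `[0, 1] s -> (@cdisc2 R) (s * x, s * y).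
  rewrite /= in_itv /= => /andP[s_ge0 s_le1]; rewrite /cdisc2 /= !exprMn -mulrDr.
  by apply: le_trans _ xy_le; rewrite ler_piMl ?addr_ge0 ?sqr_ge0 ?expr_le1.
have radius_cont : continuous (fun s : R => (s * x, s * y)).
  move=> s; exact: (cvg_pair (@mulrr_continuous _ x s) (@mulrr_continuous _ y s)).
have radius_within : (fun s => (s * x, s * y)) @ within `[0, 1] (nbhs t)
    --> within (@cdisc2 R) (nbhs (t * x, t * y)).
  move=> W /radius_cont; rewrite /= !nbhs_simpl /=.
  by apply: filterS => s Ws s01; apply: Ws; exact: radius_in.
exact: cvg_comp radius_within (g_cont _ (radius_in t t01)).
Qed.

(* Along each radius [d] starts at [0] and can never reach [cos d = 0], so the
   intermediate value theorem keeps it inside [(-pi/2, pi/2)]. *)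
Lemma continuous_arg_lt_pihalf (d : R[i] -> R) :
  {within (@cdisc2 R), continuous (fun p : R * R => d (p.1 +i* p.2))} -> d 0 = 0 ->
  (forall z, z != 0 -> cmod z <= 1 -> 0 < cos (d z)) ->
  forall z, cmod z <= 1 -> -(pi / 2) < d z < pi / 2.
Proof.
move=> d_cont d0 cos_gt0 z; have pi2_gt0 : 0 < pi / 2 :> R by rewrite divr_gt0 ?pi_gt0.
have [-> _|z_neq0] := eqVneq z 0; first by rewrite d0 pi2_gt0 oppr_lt0 pi2_gt0.
case: z z_neq0 => x y xy_neq0; rewrite cmod_le1E => xy_le.
pose f t := d ((t * x) +i* (t * y)).
have f_cont : {within `[0, 1], continuous f} := continuous_along_radius xy_le d_cont.
have f0 : f 0 = 0 by rewrite /f !mul0r.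
have cos_f_gt0 t : t \in `[0, 1]%R -> 0 < cos (f t).
  rewrite in_itv /= => /andP[t_ge0 t_le1].
  have [->|t_neq0] := eqVneq t 0; first by rewrite f0 cos0 ltr01.
  apply: cos_gt0.
    by apply: contra xy_neq0; rewrite !eq_complex /= !mulf_eq0 (negbTE t_neq0).
  rewrite cmod_le1E !exprMn -mulrDr; apply: le_trans xy_le.
  by rewrite ler_piMl ?addr_ge0 ?sqr_ge0 ?expr_le1.
have -> : d (x +i* y) = f 1 by rewrite /f !mul1r.
apply/andP; split; rewrite ltNge; apply/negP => f1_bnd.
  have [|c c01 fc] := IVT (v := - (pi / 2)) ler01 f_cont.
    by rewrite f0 ge_min le_max f1_bnd orbT /= oppr_le0 ltW.
  by move: (cos_f_gt0 c c01); rewrite fc cosN cos_pihalf ltxx.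
have [|c c01 fc] := IVT (v := pi / 2) ler01 f_cont.
  by rewrite f0 ge_min le_max f1_bnd orbT andbT ltW.
by move: (cos_f_gt0 c c01); rewrite fc cos_pihalf ltxx.
Qed.

End DiscPaths.

Section Truncation.
Variable R : realType.
Implicit Types (F G : int -> R[i]) (z : R[i]).

Lemma cmod_trunc_lt1 F N m : (forall m, cmod (F m) < 1) -> cmod (trunc F N m) < 1.
Proof. by move=> F1; rewrite /trunc; case: ifP => // _; rewrite /cmod Normc.normc0. Qed.

Lemma astar_transfer G lo k z :
  astar G lo (lo + k%:Z - 1) z = transfer G lo k z ord_max ord_max.
Proof. by rewrite /astar /Xabove (_ : lo + k%:Z - 1 - lo + 1 = k%:Z) //; lia. Qed.

Lemma astar_trunc_recursion F n0 n z : `|n0| < n ->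
  let T := transfer (trunc F (n - 1)) n0 (absz (n - n0)) z in
  astar (trunc F n) n0 n z =
    (step_scale (F n))%:C * (F n * z ^ n * T ord0 ord_max + T ord_max ord_max).
Proof.
move=> n_gt T; set k := absz (n - n0) in T *.
have n_eq : n = n0 + k%:Z by rewrite /k; lia.
rewrite /astar /Xabove (_ : absz (n - n0 + 1) = k.+1) /=; last by rewrite /k; lia.
rewrite -n_eq mulmx_step11 (@eq_transfer _ _ (trunc F (n - 1))) => [|m /andP[n0_le m_lt]].
  by rewrite /trunc ger0_norm ?lexx //; lia.
by rewrite /trunc !ifT //; lia.
Qed.

Lemma astar_trunc_ratio F n0 n z :
  (forall m, cmod (F m) < 1) -> `|n0| < n -> z != 0 -> cmod z <= 1 ->
  let a0 := astar (trunc F (n - 1)) n0 (n - 1) z in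
  exists u, [/\ a0 != 0, cmod u <= cmod (F n) &
                astar (trunc F n) n0 n z = (step_scale (F n))%:C * (a0 * (1 + u))].
Proof.
move=> F1 n_gt z_neq0 z_le1 a0.
set T := transfer (trunc F (n - 1)) n0 (absz (n - n0)) z.
have n_eq : n = n0 + (absz (n - n0))%:Z by lia.
have a0E : a0 = T ord_max ord_max.
  by have := astar_transfer (trunc F (n - 1)) n0 (absz (n - n0)) z; rewrite -n_eq.
have := transfer_norm_gap n0 (absz (n - n0)) (fun m => cmod_trunc_lt1 (n - 1) m F1) z_neq0 z_le1.
rewrite -n_eq -/T -a0E; set b := z ^ n * T ord0 ord_max => gap.
have b_le : `|b| ^+ 2 <= `|a0| ^+ 2 by apply: le_trans gap; rewrite lerDr.
have a0_neq0 : a0 != 0.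
  have one_le : 1 <= `|a0| ^+ 2 by apply: le_trans gap; rewrite lerDl exprn_ge0.
  by apply: contraTneq one_le => ->; rewrite normr0 expr0n /= ler10.
exists (F n * b / a0); split => //.
  rewrite -lecR; change (`|F n * b / a0| <= `|F n|).
  rewrite normrM normfV normrM -mulrA ler_piMr ?normr_ge0 // ler_pdivrMr ?normr_gt0 // mul1r.
  by rewrite -(ler_pXn2r (ltn0Sn 1)) ?nnegrE ?normr_ge0.
rewrite astar_trunc_recursion // -/T -a0E; congr (_ * _).
by rewrite mulrDr mulr1 [a0 * _]mulrC divfK // addrC /b mulrA.
Qed.

Lemma arg_astar_trunc_diff_le F n0 n theta1 theta0 :
  (forall m, cmod (F m) < 1) -> cmod (F n) <= 1 / 2 -> `|n0| < n ->
  is_arg_astar (trunc F n) n0 n theta1 ->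
  is_arg_astar (trunc F (n - 1)) n0 (n - 1) theta0 ->
  forall z, cmod z <= 1 -> `|theta1 z - theta0 z| <= 2 * cmod (F n).
Proof.
move=> F1 Fn_le n_gt [theta1_cont theta1_0 theta1_polar] [theta0_cont theta0_0 theta0_polar].
pose d z := theta1 z - theta0 z.
have tan_d z : z != 0 -> cmod z <= 1 -> 0 < cos (d z) /\ `|tan (d z)| <= 2 * cmod (F n).
  move=> z_neq0 z_le1; have [u [a0_neq0 u_le a1E]] := astar_trunc_ratio F1 n_gt z_neq0 z_le1.
  have [cos_gt0 tan_le] := tan_arg_diff_le (step_scale_gt0 (F1 n)) a0_neq0
    (le_trans u_le Fn_le) a1E (theta1_polar z z_neq0 z_le1) (theta0_polar z z_neq0 z_le1).
  by split=> //; apply: le_trans tan_le _; rewrite ler_wpM2l.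
have d_cont : {within (@cdisc2 R), continuous (fun p : R * R => d (p.1 +i* p.2))}.
  by move=> p; exact: continuousB (theta1_cont p) (theta0_cont p).
have d0 : d 0 = 0 by rewrite /d theta1_0 theta0_0 subrr.
move=> z z_le1; have [->|z_neq0] := eqVneq z 0.
  by rewrite theta1_0 theta0_0 subrr normr0 mulr_ge0 ?cmod_ge0.
have d_bnd := continuous_arg_lt_pihalf d_cont d0 (fun z z_neq0 z_le1 => (tan_d z z_neq0 z_le1).1).
exact: le_trans (normr_le_tan (d_bnd z z_le1)) (tan_d z z_neq0 z_le1).2.
Qed.

End Truncation.

Local Close Scope complex_scope.
Local Close Scope classical_set_scope.

Theorem lemma4p2 (R : realType) :
  exists C : R,
  forall (F : int -> R[i]) (n0 : int),
    (forall n : int, cmod (F n) < 1) ->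
    (forall n : int, (n < n0)%R -> F n = 0) ->
    (forall eps : R, 0 < eps -> exists N : int, forall n : int, (N <= n)%R -> cmod (F n) < eps) ->
    (exists N : int, forall n : int, (N <= n)%R ->
       forall theta1 theta0 : R[i] -> R,
         is_arg_astar (trunc F n) n0 n theta1 ->
         is_arg_astar (trunc F (n - 1)) n0 (n - 1) theta0 ->
         forall z : R[i], cmod z <= 1 ->
           `|theta1 z - theta0 z| <= C * cmod (F n))
    /\
    (forall eps : R, 0 < eps -> exists N : int, forall n : int, (N <= n)%R ->
       forall theta1 theta0 : R[i] -> R,
         is_arg_astar (trunc F n) n0 n theta1 ->
         is_arg_astar (trunc F (n - 1)) n0 (n - 1) theta0 ->
         forall z : R[i], cmod z <= 1 ->
           `|theta1 z - theta0 z| < eps).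
Proof.
exists 2 => F n0 F1 _ F_small.
have [N1 N1_small] := F_small (1 / 2) (divr_gt0 ltr01 (ltr0Sn _ 1)).
pose N := (`|N1| + `|n0| + 1)%R.
have bound n : (N <= n)%R -> forall theta1 theta0,
    is_arg_astar (trunc F n) n0 n theta1 -> is_arg_astar (trunc F (n - 1)) n0 (n - 1) theta0 ->
    forall z, cmod z <= 1 -> `|theta1 z - theta0 z| <= 2 * cmod (F n).
  move=> n_ge theta1 theta0; apply: arg_astar_trunc_diff_le => //; last by rewrite /N in n_ge; lia.
  by apply/ltW/N1_small; rewrite /N in n_ge; lia.
split; first by exists N.
move=> eps eps_gt0; have [N2 N2_small] := F_small (eps / 2) (divr_gt0 eps_gt0 (ltr0Sn _ 1)).
exists (N + `|N2|)%R => n n_ge theta1 theta0 arg1 arg0 z z_le1.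
apply: le_lt_trans (bound n _ theta1 theta0 arg1 arg0 z z_le1) _; first by rewrite /N in n_ge *; lia.
have /N2_small : (N2 <= n)%R by rewrite /N in n_ge; lia.
lra.
Qed.
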